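(* For every $n\in\mathbb{N}$, with $N=4^n$ the number of vertices, the diameter $D_n$ of $\mathcal{T}_n$ is $$D_n=\frac{2\sqrt{N}-1}{3}=\frac{2^{n+1}-1}{3}\ \text{ if } n \text{ is odd},\qquad D_n=\frac{2(\sqrt{N}-1)}{3}=\frac{2(2^{n}-1)}{3}\ \text{ if } n \text{ is even}.$$
   Context: For $n\in\mathbb{N}$ let $G_n=\mathbb{Z}_{2^n}\times\mathbb{Z}_{2^n}$ (additive group), so $|G_n|=N=4^n$. Let $S^+=\{(-1,-1),(1,0),(0,1)\}$ and $S=S^+\cup(-S^+)=\{\pm(1,0),\pm(0,1),\pm(1,1)\}$. The undirected graph $\mathcal{T}_n$ (the undirected ''arrowhead'', equivalently the undirected ''diamond'') is the Cayley graph $\Gamma(G_n,S)$: its vertex set is $G_n$ and each vertex $u$ is adjacent to $u+s$ for every $s\in S$ (arithmetic modulo $2^n$ in each coordinate). The diameter of a graph is the maximum, over all pairs of vertices, of the length of a shortest path between them. ($\mathcal{T}_0$ is a single vertex.) *)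

From mathcomp Require Import all_boot.
Set Implicit Arguments. Unset Strict Implicit. Unset Printing Implicit Defensive.

Definition vtx (n : nat) : finType := ('I_(2 ^ n) * 'I_(2 ^ n))%type.

Lemma modn_exp2_lt (n a : nat) : a %% 2 ^ n < 2 ^ n.
Proof. by rewrite ltn_pmod // expn_gt0. Qed.

Definition zadd (n : nat) (a : 'I_(2 ^ n)) (b : nat) : 'I_(2 ^ n) :=
  Ordinal (modn_exp2_lt n (a + b)).

Definition vadd (n : nat) (u : vtx n) (s : nat * nat) : vtx n :=
  (zadd u.1 s.1, zadd u.2 s.2).

(* S = {±(1,0), ±(0,1), ±(1,1)}, with -1 represented by 2^n - 1 (mod 2^n) *)
Definition gensS (n : nat) : seq (nat * nat) :=
  let m1 := (2 ^ n).-1 in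
  [:: (1, 0); (m1, 0); (0, 1); (0, m1); (1, 1); (m1, m1)].

Definition adjT (n : nat) (u v : vtx n) : bool :=
  has (fun s => v == vadd u s) (gensS n).

Fixpoint reach (n : nat) (k : nat) (u v : vtx n) : bool :=
  match k with
  | 0 => u == v
  | k'.+1 => reach k' u v || [exists w, adjT u w && reach k' w v]
  end.

(* A shortest path has at most #|vtx n| - 1 edges, so searching k < #|vtx n|
   suffices; the value #|vtx n| would only be returned for unreachable pairs. *)
Definition dist (n : nat) (u v : vtx n) : nat :=
  find (fun k => reach k u v) (iota 0 #|vtx n|).

Definition diameter (n : nat) : nat :=
  \max_(u : vtx n) \max_(v : vtx n) dist u v.

(* In the Cayley graph on (Z/M)^2, a walk of length k from u to v exists iff
   v - u lifts to an integer vector (P, Q) with max(|P|, |Q|, |P - Q|) <= k,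
   this being the word length of Z^2 for the generators +-(1,0), +-(0,1),
   +-(1,1).  Reducing v - u into [0, M)^2 and trying the four shifts by M
   gives a lift of norm at most floor(2M/3), and the residue
   (floor(M/3), floor(2M/3)) has no shorter lift, so the diameter is
   floor(2M/3); for M = 2^n this is the claimed value. *)

From Stdlib Require Import ZArith Lia.
From mathcomp Require Import all_boot zify ssrZ.

Set Implicit Arguments.
Unset Strict Implicit.
Unset Printing Implicit Defensive.

Section HexNorm.
Local Open Scope Z_scope.

(* The word length of (P, Q) in Z^2 for the generators [zgens]. *)
Definition hnorm (P Q : Z) : Z :=
  Z.max (Z.abs P) (Z.max (Z.abs Q) (Z.abs (P - Q))).

Definition zgens : seq (Z * Z) :=
  [:: (1, 0); (-1, 0); (0, 1); (0, -1); (1, 1); (-1, -1)].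

Lemma hnorm_le P Q k :
  hnorm P Q <= k <-> Z.abs P <= k /\ Z.abs Q <= k /\ Z.abs (P - Q) <= k.
Proof. by rewrite /hnorm !Z.max_lub_iff. Qed.

Lemma hnormD P1 Q1 P2 Q2 :
  hnorm (P1 + P2) (Q1 + Q2) <= hnorm P1 Q1 + hnorm P2 Q2.
Proof.
have [? [? ?]] := proj1 (hnorm_le P1 Q1 _) (Z.le_refl _).
have [? [? ?]] := proj1 (hnorm_le P2 Q2 _) (Z.le_refl _).
apply/hnorm_le; lia.
Qed.

Lemma hnorm_zgens z : z \in zgens -> hnorm z.1 z.2 = 1.
Proof.
by rewrite !inE => /or4P [/eqP ->|/eqP ->|/eqP ->|/orP [/eqP ->|/orP [] /eqP ->]].
Qed.

Lemma hnorm_descent P Q : 0 < hnorm P Q ->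
  exists2 z, z \in zgens & hnorm (P - z.1) (Q - z.2) < hnorm P Q.
Proof.
move=> hpos; set h := hnorm P Q in hpos *.
have [hP [hQ hPQ]] := proj1 (hnorm_le P Q h) (Z.le_refl _).
have step a b : (a, b) \in zgens -> hnorm (P - a) (Q - b) <= h - 1 ->
    exists2 z, z \in zgens & hnorm (P - z.1) (Q - z.2) < h.
  by move=> hz hle; exists (a, b) => //=; lia.
case: (Z.lt_trichotomy P 0) => [sP|[sP|sP]];
  case: (Z.lt_trichotomy Q 0) => [sQ|[sQ|sQ]];
  [ apply: (step (-1) (-1)) | apply: (step (-1) 0) | apply: (step (-1) 0)
  | apply: (step 0 (-1)) | | apply: (step 0 1)
  | apply: (step 1 0) | apply: (step 1 0) | apply: (step 1 1) ] => //;
  try (apply/hnorm_le; lia).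
by subst; rewrite /h /hnorm in hpos.
Qed.

Lemma Zdivide_add_eq m x y z : (m | x) -> (m | y) -> z = x + y -> (m | z).
Proof. by move=> hx hy ->; apply: Z.divide_add_r. Qed.

Lemma hnorm_cover_range M D a b : 0 <= a < M -> 0 <= b < M ->
  2 * M < 3 * D + 3 ->
  exists P Q, (M | P - a) /\ (M | Q - b) /\ hnorm P Q <= D.
Proof.
move=> ha hb hD.
have : hnorm a b <= D \/ hnorm (a - M) b <= D \/
       hnorm a (b - M) <= D \/ hnorm (a - M) (b - M) <= D by rewrite !hnorm_le; lia.
case=> [|[|[|]]] h;
  [exists a; exists b | exists (a - M); exists b
  | exists a; exists (b - M) | exists (a - M); exists (b - M)];
  (split; [|split => //]); by [exists 0; ring | exists (-1); ring].
Qed.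

Lemma hnorm_cover M D a b : 0 < M -> 2 * M < 3 * D + 3 ->
  exists P Q, (M | P - a) /\ (M | Q - b) /\ hnorm P Q <= D.
Proof.
move=> hM hD.
have [P [Q [hP [hQ hn]]]] :=
  hnorm_cover_range (Z.mod_pos_bound a M hM) (Z.mod_pos_bound b M hM) hD.
have mod_congr x : (M | x mod M - x) by exists (- (x / M)); rewrite Zmod_eq; [ring | lia].
exists P, Q; split; [|split => //].
- by apply: (Zdivide_add_eq hP (mod_congr a)); ring.
- by apply: (Zdivide_add_eq hQ (mod_congr b)); ring.
Qed.

Lemma hnorm_far M D t P Q : 0 <= t -> D + t <= M -> 2 * D <= M + t ->
  (M | P - t) -> (M | Q - D) -> D <= hnorm P Q.
Proof.
move=> ht hDt hD2 [c1 e1] [c2 e2].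
apply/Z.nlt_ge => /Z.lt_le_pred /hnorm_le hb.
have c1s : c1 <= -2 \/ c1 = -1 \/ 0 <= c1 by lia.
have c2s : c2 <= -2 \/ c2 = -1 \/ 0 <= c2 by lia.
case: c1s => [?|[?|?]]; case: c2s => [?|[?|?]]; nia.
Qed.

End HexNorm.

Definition zval m (x : 'I_m) : Z := Z.of_nat x.

Lemma zval_bound m (x : 'I_m) : (0 <= zval x < Z.of_nat m)%Z.
Proof. by rewrite /zval; have := ltn_ord x; lia. Qed.

Lemma zval_congr_inj m (x y : 'I_m) : (Z.of_nat m | zval x - zval y)%Z -> x = y.
Proof.
move=> [c e]; have hx := zval_bound x; have hy := zval_bound y.
have c0 : c = 0%Z by nia.
by apply: val_inj => /=; move: e; rewrite c0 /zval; lia.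
Qed.

Section Torus.
Variable n : nat.
Local Notation M := (Z.of_nat (2 ^ n)).

Lemma Z_of_exp2_gt0 : (0 < M)%Z.
Proof. have : 0 < 2 ^ n by rewrite expn_gt0. lia. Qed.

Definition lifts (u v : vtx n) (P Q : Z) : Prop :=
  (M | P - (zval v.1 - zval u.1))%Z /\ (M | Q - (zval v.2 - zval u.2))%Z.

Lemma lifts_congr u v P Q P' Q' :
  lifts u v P Q -> (M | P' - P)%Z -> (M | Q' - Q)%Z -> lifts u v P' Q'.
Proof.
move=> [hP hQ] dP dQ.
by split; [apply: (Zdivide_add_eq dP hP) | apply: (Zdivide_add_eq dQ hQ)]; ring.
Qed.

Lemma liftsD u w v a b P Q :
  lifts u w a b -> lifts w v P Q -> lifts u v (a + P) (b + Q).
Proof.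
move=> [ha hb] [hP hQ].
by split; [apply: (Zdivide_add_eq ha hP) | apply: (Zdivide_add_eq hb hQ)]; ring.
Qed.

Lemma liftsB u w v a b P Q :
  lifts u w a b -> lifts u v P Q -> lifts w v (P - a) (Q - b).
Proof.
move=> [ha hb] [hP hQ].
by split; [apply: (Zdivide_add_eq hP (proj2 (Z.divide_opp_r _ _) ha))
          | apply: (Zdivide_add_eq hQ (proj2 (Z.divide_opp_r _ _) hb))]; ring.
Qed.

Lemma lifts00 u v : lifts u v 0 0 -> u = v.
Proof.
case: u v => [x y] [x' y'] [/= hx hy].
move/Z.divide_opp_r in hx; move/Z.divide_opp_r in hy.
by rewrite (zval_congr_inj hx) (zval_congr_inj hy).
Qed.

Lemma zval_zadd (a : 'I_(2 ^ n)) b : (M | Z.of_nat b - (zval (zadd a b) - zval a))%Z.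
Proof.
rewrite /zval /=; have := divn_eq (a + b) (2 ^ n).
by exists (Z.of_nat ((a + b) %/ 2 ^ n)); lia.
Qed.

Lemma lifts_vadd u s : lifts u (vadd u s) (Z.of_nat s.1) (Z.of_nat s.2).
Proof. by split; apply: zval_zadd. Qed.

Definition zrep (z : Z) : nat := if (z <? 0)%Z then (2 ^ n).-1 else Z.to_nat z.

Lemma zrep_congr z : (-1 <= z)%Z -> (M | z - Z.of_nat (zrep z))%Z.
Proof.
rewrite /zrep; case: Z.ltb_spec => hz hge.
- by exists (-1)%Z; have := Z_of_exp2_gt0; lia.
- by exists 0%Z; lia.
Qed.

Lemma gensS_zgens : gensS n = [seq (zrep z.1, zrep z.2) | z <- zgens].
Proof. by []. Qed.

Lemma lifts_zgen u z :
  z \in zgens -> lifts u (vadd u (zrep z.1, zrep z.2)) z.1 z.2.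
Proof.
move=> /hnorm_zgens /Z.eq_le_incl /hnorm_le [h1 [h2 _]].
by apply: lifts_congr (lifts_vadd _ _) _ _; apply: zrep_congr; lia.
Qed.

Lemma adjT_zgens (u w : vtx n) :
  adjT u w = has (fun z => w == vadd u (zrep z.1, zrep z.2)) zgens.
Proof. by rewrite /adjT gensS_zgens has_map. Qed.

Lemma reach_lifts k (u v : vtx n) : reach k u v ->
  exists P Q, lifts u v P Q /\ (hnorm P Q <= Z.of_nat k)%Z.
Proof.
elim: k u => [|k IH] u /=.
  by move/eqP=> ->; exists 0%Z, 0%Z; split; [split; exists 0%Z | apply/hnorm_le]; lia.
case/orP=> [/IH [P [Q [hl hn]]] | /existsP [w /andP [huw /IH [P [Q [hl hn]]]]]].
  by exists P, Q; split=> //; lia.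
move: huw; rewrite adjT_zgens => /hasP [z hz /eqP wE]; rewrite {}wE in hl.
exists (z.1 + P)%Z, (z.2 + Q)%Z; split; first exact: liftsD (lifts_zgen u hz) hl.
by have := @hnormD z.1 z.2 P Q; rewrite hnorm_zgens //; lia.
Qed.

Lemma lifts_reach k (u v : vtx n) P Q :
  lifts u v P Q -> (hnorm P Q <= Z.of_nat k)%Z -> reach k u v.
Proof.
elim: k u P Q => [|k IH] u P Q hl hn /=.
  have /hnorm_le [hP [hQ _]] := hn.
  have P0 : P = 0%Z by lia.
  have Q0 : Q = 0%Z by lia.
  by rewrite P0 Q0 in hl; rewrite (lifts00 hl).
have [hk|hk] := Z.le_gt_cases (hnorm P Q) (Z.of_nat k); first by rewrite (IH u P Q).
have hpos : (0 < hnorm P Q)%Z by lia.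
have [z hz hlt] := hnorm_descent hpos.
apply/orP; right; apply/existsP; exists (vadd u (zrep z.1, zrep z.2)).
rewrite adjT_zgens; apply/andP; split; first by apply/hasP; exists z.
by apply: (IH _ (P - z.1) (Q - z.2))%Z; [exact: liftsB (lifts_zgen u hz) hl | lia].
Qed.

Lemma dist_le (u v : vtx n) k : k < #|vtx n| -> reach k u v -> dist u v <= k.
Proof.
move=> hk hr; rewrite leqNgt; apply/negP => hlt.
by have := before_find 0 hlt; rewrite nth_iota // add0n hr.
Qed.

Lemma reach_dist (u v : vtx n) : dist u v < #|vtx n| -> reach (dist u v) u v.
Proof.
move=> hd; have hhas : has (fun k => reach k u v) (iota 0 #|vtx n|).
  by rewrite has_find size_iota.
by have := nth_find 0 hhas; rewrite nth_iota // add0n.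
Qed.

Lemma diameter_eq : diameter n = (2 * 2 ^ n) %/ 3.
Proof.
set D := (2 * 2 ^ n) %/ 3; set t := 2 ^ n %/ 3.
have hM : 0 < 2 ^ n by rewrite expn_gt0.
have hD : D < 2 ^ n by lia.
have ht : t < 2 ^ n by lia.
have hDcard : D < #|vtx n| by rewrite card_prod card_ord; nia.
apply/eqP; rewrite eqn_leq; apply/andP; split.
  apply/bigmax_leqP => u _; apply/bigmax_leqP => v _; apply: dist_le hDcard _.
  have hMD : (2 * M < 3 * Z.of_nat D + 3)%Z by lia.
  have [P [Q [hP [hQ hn]]]] :=
    hnorm_cover (zval v.1 - zval u.1) (zval v.2 - zval u.2) Z_of_exp2_gt0 hMD.
  exact: (lifts_reach (conj hP hQ)).
(* The vertex (floor(M/3), floor(2M/3)) is farthest from the origin. *)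
pose u0 : vtx n := (Ordinal hM, Ordinal hM).
pose v0 : vtx n := (Ordinal ht, Ordinal hD).
apply: (@leq_trans (dist u0 v0)).
  2: by apply: (bigmax_sup u0) => //; apply: (bigmax_sup v0).
rewrite leqNgt; apply/negP => hlt.
have [P [Q [[hP hQ] hn]]] := reach_lifts (reach_dist (ltn_trans hlt hDcard)).
rewrite /zval /= !Z.sub_0_r in hP hQ.
suff : (Z.of_nat D <= hnorm P Q)%Z by lia.
by apply: hnorm_far hP hQ; lia.
Qed.

End Torus.

Lemma expn2_mod3 n : 2 ^ n %% 3 = (if odd n then 2 else 1).
Proof. by elim: n => // n IH; rewrite expnS -modnMmr IH /=; case: odd. Qed.

Theorem proposition1 (n : nat) :
  diameter n =
  (if odd n then (2 ^ n.+1 - 1) %/ 3 else (2 * (2 ^ n - 1)) %/ 3).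
Proof.
rewrite diameter_eq expnS.
by have := expn2_mod3 n; case: odd => h; lia.
Qed.
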